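(* Let $K$ be a pathwise connected poset and fix $o\in K$. The assignment sending a $\mathrm{C}^*$-net bundle $(\mathcal A,\jmath)_K$ over $K$ to its holonomy dynamical system $(\mathcal A_o,\pi_1^o(K),\jmath_* )$ induces a bijection between isomorphism classes of $\mathrm{C}^*$-net bundles over $K$ and isomorphism classes of $\mathrm{C}^*$-dynamical systems with group $\pi_1^o(K)$ (isomorphisms of dynamical systems being ${}^*$-isomorphisms $\eta$ with $\eta\circ\alpha_g=\beta_g\circ\eta$ for all $g$). In particular, the category of $\mathrm{C}^*$-net bundles over $K$, with morphisms of the form $(\phi,\mathrm{id}_K)$, is equivalent to the category of $\mathrm{C}^*$-dynamical systems $(\mathrm A,\pi_1^o(K),\alpha)$, with morphisms the ${}^*$-morphisms $\eta:\mathrm A\to\mathrm B$ satisfying $\eta\circ\alpha_g=\beta_g\circ\eta$ for all $g\in\pi_1^o(K)$.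
   Context: Poset homotopy. Let $K$ be a poset. The $0$-simplices are the elements of $K$; for $n\ge1$ an $n$-simplex $x$ consists of $n+1$ $(n-1)$-simplices $\partial_0x,\dots,\partial_nx$ together with an element $|x|\in K$ (the support) with $|\partial_ix|\le|x|$ for all $i$. For $a\le\tilde a$, $(\tilde a a)$ denotes the $1$-simplex with $\partial_1=a$, $\partial_0=\tilde a$ and support $\tilde a$. A path $p=b_n*\cdots*b_1$ is a finite sequence of $1$-simplices with $\partial_0b_{i}=\partial_1b_{i+1}$; it goes from $\partial_1b_1$ to $\partial_0b_n$; a loop over $o$ is a path from $o$ to $o$. $K$ is pathwise connected if any two elements are joined by a path. An elementary deformation of a path replaces two consecutive $1$-simplices $\partial_0c*\partial_2c$ by $\partial_1c$, or conversely, for some $2$-simplex $c$; homotopy $\sim$ is the equivalence relation generated. $\pi_1^o(K)$ is the group of homotopy classes of loops over $o$ with $[p][q]=[p*q]$. Nets. A net of $\mathrm{C}^*$-algebras $(\mathcal A,\jmath)_K$ assigns to each $o\in K$ a unital $\mathrm{C}^*$-algebra $\mathcal A_o$ and to each $a\le o$ a unital injective ${}^*$-morphism $\jmath_{oa}:\mathcal A_a\to\mathcal A_o$ with $\jmath_{oa}\circ\jmath_{ae}=\jmath_{oe}$ for $e\le a\le o$. It is a $\mathrm{C}^*$-net bundle if all $\jmath_{oa}$ are ${}^*$-isomorphisms; then set $\jmath_{ao}:=\jmath_{oa}^{-1}$. A morphism $(\phi,\mathrm f):(\mathcal A,\jmath)_K\to(\mathcal B,\imath)_P$ is an order preserving map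 $\mathrm f:K\to P$ together with ${}^*$-morphisms $\phi_o:\mathcal A_o\to\mathcal B_{\mathrm f(o)}$ with $\phi_o\circ\jmath_{oa}=\imath_{\mathrm f(o)\mathrm f(a)}\circ\phi_a$ for $a\le o$; it is an isomorphism if $\mathrm f$ is an order isomorphism and all $\phi_o$ are ${}^*$-isomorphisms. Holonomy. For a $\mathrm{C}^*$-net bundle and a $1$-simplex $b$ set $\jmath_b:=\jmath_{\partial_0b\,|b|}\circ\jmath_{|b|\,\partial_1b}$, and for a path $p=b_n*\cdots*b_1$ set $\jmath_p:=\jmath_{b_n}\circ\cdots\circ\jmath_{b_1}$; $\jmath_p$ depends only on the homotopy class of $p$. The holonomy dynamical system is $(\mathcal A_o,\pi_1^o(K),\jmath_* )$ with $\jmath_{*,[p]}:=\jmath_p$. *)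

From Stdlib Require Import Relations ClassicalEpsilon.
From mathcomp Require Import all_boot all_order all_algebra.
From mathcomp Require Import reals.
From mathcomp.real_closed Require Import complex.

Set Implicit Arguments.
Unset Strict Implicit.
Unset Printing Implicit Defensive.

Import Order.TTheory GRing.Theory Num.Theory.
Local Open Scope ring_scope.

Section CStar.
Variable R : realType.
Local Notation C := (R[i]).
Local Notation normc := (@ComplexField.Normc.normc R).

Record cstar := CStar {
  cs_car :> lmodType C;
  cs_mul : cs_car -> cs_car -> cs_car;
  cs_one : cs_car;
  cs_star : cs_car -> cs_car;
  cs_norm : cs_car -> R;
  cs_mulA : forall x y z, cs_mul x (cs_mul y z) = cs_mul (cs_mul x y) z;
  cs_mul1l : forall x, cs_mul cs_one x = x;
  cs_mul1r : forall x, cs_mul x cs_one = x;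
  cs_mulDl : forall x y z, cs_mul (x + y) z = cs_mul x z + cs_mul y z;
  cs_mulDr : forall x y z, cs_mul x (y + z) = cs_mul x y + cs_mul x z;
  cs_scaleAl : forall (a : C) x y, cs_mul (a *: x) y = a *: cs_mul x y;
  cs_scaleAr : forall (a : C) x y, cs_mul x (a *: y) = a *: cs_mul x y;
  cs_starK : forall x, cs_star (cs_star x) = x;
  cs_starD : forall x y, cs_star (x + y) = cs_star x + cs_star y;
  cs_starZ : forall (a : C) x, cs_star (a *: x) = conjc a *: cs_star x;
  cs_starM : forall x y, cs_star (cs_mul x y) = cs_mul (cs_star y) (cs_star x);
  cs_norm_eq0 : forall x, cs_norm x = 0 <-> x = 0;
  cs_normD : forall x y, cs_norm (x + y) <= cs_norm x + cs_norm y;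
  cs_normZ : forall (a : C) x, cs_norm (a *: x) = normc a * cs_norm x;
  cs_normM : forall x y, cs_norm (cs_mul x y) <= cs_norm x * cs_norm y;
  cs_C_star : forall x, cs_norm (cs_mul (cs_star x) x) = cs_norm x ^+ 2;
  cs_complete : forall u : nat -> cs_car,
    (forall e : R, 0 < e -> exists N, forall m n, (N <= m)%N -> (N <= n)%N ->
        cs_norm (u m - u n) < e) ->
    exists l, forall e : R, 0 < e -> exists N, forall n, (N <= n)%N ->
        cs_norm (u n - l) < e
}.

(** *-morphisms (not necessarily unital) *)
Definition star_hom (A B : cstar) (f : A -> B) : Prop :=
  (forall (a : C) (x y : A), f (a *: x + y) = a *: f x + f y) /\
  (forall x y, f (cs_mul x y) = cs_mul (f x) (f y)) /\
  (forall x, f (cs_star x) = cs_star (f x)).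

Definition unital_map (A B : cstar) (f : A -> B) : Prop := f (cs_one A) = cs_one B.

Definition star_iso (A B : cstar) (f : A -> B) : Prop :=
  star_hom f /\ bijective f.

End CStar.

Section Poset.
Variables (d : Order.disp_t) (K : porderType d).
Local Open Scope order_scope.

Record simplex1 := Simplex1 {
  s1_d0 : K; s1_d1 : K; s1_sup : K;
  s1_d0_le : s1_d0 <= s1_sup;
  s1_d1_le : s1_d1 <= s1_sup }.

Record simplex2 := Simplex2 {
  s2_d0 : simplex1; s2_d1 : simplex1; s2_d2 : simplex1; s2_sup : K;
  s2_d0_le : s1_sup s2_d0 <= s2_sup;
  s2_d1_le : s1_sup s2_d1 <= s2_sup;
  s2_d2_le : s1_sup s2_d2 <= s2_sup;
  s2_id01 : s1_d0 s2_d0 = s1_d0 s2_d1;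
  s2_id02 : s1_d1 s2_d0 = s1_d0 s2_d2;
  s2_id12 : s1_d1 s2_d1 = s1_d1 s2_d2 }.

(** A path b_n * ... * b_1 is represented by the (nonempty) list
    [:: b_1; ...; b_n] in traversal order. *)
Fixpoint path_ft (a c : K) (s : seq simplex1) : Prop :=
  match s with
  | [::] => False
  | b :: s' => s1_d1 b = a /\
      (if s' is [::] then s1_d0 b = c else path_ft (s1_d0 b) c s')
  end.

Definition pathwise_connected : Prop := forall a c : K, exists s, path_ft a c s.

Definition is_loop (o : K) (s : seq simplex1) : Prop := path_ft o o s.

(** elementary deformation: d0c * d2c  <->  d1c *)
Definition elem_deform (p q : seq simplex1) : Prop :=
  exists (l r : seq simplex1) (c : simplex2),
    p = l ++ [:: s2_d2 c; s2_d0 c] ++ r /\ q = l ++ [:: s2_d1 c] ++ r.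

Definition homotopic : seq simplex1 -> seq simplex1 -> Prop :=
  clos_refl_sym_trans _ elem_deform.

Lemma path_ft_cat a b c s t : path_ft a b s -> path_ft b c t -> path_ft a c (s ++ t).
Proof.
move=> Hs Ht; elim: s a Hs => [//|x s IH] a /= [-> H]; split=> //.
case: s IH H => [|y s] IH H /=.
  by rewrite H; destruct t.
exact: (IH _ H).
Qed.

Definition hclass (o : K) (p : seq simplex1) : seq simplex1 -> Prop :=
  fun q => is_loop o q /\ homotopic p q.

Definition pi1 (o : K) : Type :=
  {X : seq simplex1 -> Prop | exists p, is_loop o p /\ X = hclass o p}.

Definition pi1_repr (o : K) (g : pi1 o) : seq simplex1 :=
  proj1_sig (constructive_indefinite_description _ (proj2_sig g)).

Lemma pi1_repr_loop o (g : pi1 o) : is_loop o (pi1_repr g).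
Proof.
rewrite /pi1_repr; case: constructive_indefinite_description => p [] //.
Qed.

(** [g][h] = [g * h]; in traversal order  g * h  is  repr h ++ repr g *)
Definition pi1_mul (o : K) (g h : pi1 o) : pi1 o.
Proof.
exists (hclass o (pi1_repr h ++ pi1_repr g)).
exists (pi1_repr h ++ pi1_repr g); split=> //.
exact: path_ft_cat (pi1_repr_loop h) (pi1_repr_loop g).
Defined.

Variable R : realType.

Record netbundle := NetBundle {
  nb_A : K -> cstar R;
  nb_j : forall o a : K, a <= o -> nb_A a -> nb_A o;
  nb_j_hom : forall o a (h : a <= o), star_hom (nb_j h);
  nb_j_unital : forall o a (h : a <= o), unital_map (nb_j h);
  nb_j_bij : forall o a (h : a <= o), bijective (nb_j h);
  nb_j_comp : forall o a e (h1 : e <= a) (h2 : a <= o) (h3 : e <= o) x,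
      nb_j h2 (nb_j h1 x) = nb_j h3 x }.

Arguments nb_j n {o a} _ _.
Section Holonomy.
Variable N : netbundle.
Local Notation F := (fun o => (nb_A N o : Type)).

Lemma bij_surj (T U : Type) (f : T -> U) : bijective f -> forall y, exists x, f x = y.
Proof. by case=> g _ fK y; exists (g y); rewrite fK. Qed.

Definition nb_jinv (o a : K) (h : a <= o) (y : F o) : F a :=
  proj1_sig (constructive_indefinite_description _ (bij_surj (nb_j_bij N h) y)).

Definition hol1 (b : simplex1) (x : F (s1_d1 b)) : F (s1_d0 b) :=
  nb_jinv (s1_d0_le b) (nb_j N (s1_d1_le b) x).

(** action of a 1-simplex on elements of the total space {o & A_o};
    elements not lying over d1 b are left unchanged (never happens
    along a path). *)
Definition hol1_tag (b : simplex1) (u : {o : K & F o}) : {o : K & F o} :=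
  if tag u == s1_d1 b then
    Tagged F (hol1 (tagged_as (Tagged F (0 : nb_A N (s1_d1 b))) u))
  else u.

Definition hol_path (p : seq simplex1) (u : {o : K & F o}) : {o : K & F o} :=
  foldl (fun v b => hol1_tag b v) u p.

Definition holonomy (o : K) (g : pi1 o) (x : F o) : F o :=
  tagged_as (Tagged F x) (hol_path (pi1_repr g) (Tagged F x)).

End Holonomy.

(** morphisms of net bundles of the form (phi, id_K) *)
Definition nb_morph (N M : netbundle)
    (phi : forall o, nb_A N o -> nb_A M o) : Prop :=
  (forall o, star_hom (phi o)) /\
  (forall o a (h : a <= o) x, phi o (nb_j N h x) = nb_j M h (phi a x)).

Definition nb_iso (N M : netbundle) : Prop :=
  exists phi : forall o, nb_A N o -> nb_A M o,
    nb_morph phi /\ forall o, bijective (phi o).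

Definition is_dynsys (o : K) (A : cstar R) (alpha : pi1 o -> A -> A) : Prop :=
  (forall g, star_iso (alpha g)) /\
  (forall g h x, alpha (pi1_mul g h) x = alpha g (alpha h x)).

Definition dyn_morph (o : K) (A B : cstar R) (alpha : pi1 o -> A -> A)
    (beta : pi1 o -> B -> B) (eta : A -> B) : Prop :=
  star_hom eta /\ forall g x, eta (alpha g x) = beta g (eta x).

Definition dyn_iso (o : K) (A B : cstar R) (alpha : pi1 o -> A -> A)
    (beta : pi1 o -> B -> B) : Prop :=
  exists eta : A -> B, dyn_morph alpha beta eta /\ bijective eta.

End Poset.

Arguments holonomy {d K R} N o g x.
Arguments nb_morph {d K R} N M phi.

From mathcomp Require Import all_boot all_order all_algebra.
From mathcomp Require Import reals.
From mathcomp.real_closed Require Import complex.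
From Stdlib Require Import Relations ClassicalEpsilon FunctionalExtensionality PropExtensionality ProofIrrelevance.

(* Since all the [j] are isomorphisms, every path [p] from [a] to [c] induces
   a *-isomorphism [A_a -> A_c] (parallel transport), and transport only
   depends on the homotopy class of [p]: the three faces of a 2-simplex
   induce the same map once everything is pushed into the fibre over its
   support.  Choose for each [a] a path [sp a] from [o] to [a].  Transport
   along [sp a] identifies every fibre with [A_o] and turns [j_{ba}] into the
   holonomy of the loop running along [sp a], then from [a] up to [b], then
   back along [sp b]; so a net bundle is determined by its holonomy, and a
   morphism of net bundles by its component at [o].  Conversely, given a
   dynamical system [alpha], letting [j_{ba}] be [alpha] of that loop defines
   a net bundle whose holonomy is [alpha] conjugated by [alpha [sp o]]. *)

Set Implicit Arguments.
Unset Strict Implicit.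
Unset Printing Implicit Defensive.
Import Order.TTheory.

Section StarMorphisms.
Variable R : realType.
Implicit Types A B C : cstar R.

Lemma star_hom_id A : star_hom (@id A).
Proof. by split; [|split]. Qed.

Lemma star_hom_comp A B C (f : A -> B) (g : B -> C) :
  star_hom f -> star_hom g -> star_hom (g \o f).
Proof.
move=> [f1 [f2 f3]] [g1 [g2 g3]]; split; [|split] => * /=.
- by rewrite f1 g1.
- by rewrite f2 g2.
- by rewrite f3 g3.
Qed.

Lemma star_hom_can A B (f : A -> B) (g : B -> A) :
  star_hom f -> cancel f g -> cancel g f -> star_hom g.
Proof.
move=> [f1 [f2 f3]] fK gK; have fI := can_inj fK.
split; [|split] => *; apply: fI.
- by rewrite f1 !gK.
- by rewrite f2 !gK.
- by rewrite f3 !gK.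
Qed.

Lemma star_iso_id A : star_iso (@id A).
Proof. by split; [exact: star_hom_id | exists id]. Qed.

Lemma star_iso_comp A B C (f : A -> B) (g : B -> C) :
  star_iso f -> star_iso g -> star_iso (g \o f).
Proof. by move=> [hf bf] [hg bg]; split; [exact: star_hom_comp | exact: bij_comp]. Qed.

Lemma star_iso_can A B (f : A -> B) (g : B -> A) :
  star_iso f -> cancel f g -> cancel g f -> star_iso g.
Proof. by move=> [hf _] fK gK; split; [exact: star_hom_can hf fK gK | exists f]. Qed.

Lemma eq_star_iso A B (f g : A -> B) : f =1 g -> star_iso f -> star_iso g.
Proof. by move=> /functional_extensionality ->. Qed.

Lemma star_iso_unital A B (f : A -> B) : star_iso f -> unital_map f.
Proof.
move=> [[_ [fM _]] [g fK gK]].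
have E : cs_mul (f (cs_one A)) (f (g (cs_one B))) = f (g (cs_one B)).
  by rewrite -fM cs_mul1l.
by move: E; rewrite gK cs_mul1r.
Qed.

End StarMorphisms.

Section Walks.
Variables (d : Order.disp_t) (K : porderType d).
Local Open Scope order_scope.
Implicit Types (a b c : K) (x : simplex1 K) (s p q l r : seq (simplex1 K)).

Definition degen a : simplex1 K := @Simplex1 d K a a a (lexx a) (lexx a).

Definition flip x : simplex1 K :=
  @Simplex1 d K (s1_d1 x) (s1_d0 x) (s1_sup x) (s1_d1_le x) (s1_d0_le x).

Definition edge a b (h : a <= b) : simplex1 K := @Simplex1 d K b a b (lexx b) h.

Fixpoint is_walk a s : bool :=
  if s is x :: s' then (s1_d1 x == a) && is_walk (s1_d0 x) s' else true.

Definition walk_end a s : K := last a (map (@s1_d0 d K) s).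

Lemma walk_end_cons a x s : walk_end a (x :: s) = walk_end (s1_d0 x) s.
Proof. by []. Qed.

Lemma path_ftE a c s :
  path_ft a c s <-> [/\ ~~ nilp s, is_walk a s & walk_end a s = c].
Proof.
elim: s a => [|x s IH] a /=; first by split=> // -[].
rewrite walk_end_cons; case: s IH => [|y s] IH /=.
  split; first by case=> -> ->; rewrite eqxx.
  by case=> _ /andP[/eqP -> _] <-.
split; first by case=> -> /IH [_ H1 H2]; rewrite eqxx.
by case=> _ /andP[/eqP -> H1] H2; split=> //; apply/IH.
Qed.

Lemma is_walk_cat a s t : is_walk a (s ++ t) = is_walk a s && is_walk (walk_end a s) t.
Proof. by elim: s a => [|x s IH] a //=; rewrite IH andbA. Qed.

Lemma walk_end_cat a s t : walk_end a (s ++ t) = walk_end (walk_end a s) t.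
Proof. by rewrite /walk_end map_cat last_cat. Qed.

Definition revpath s := rev (map flip s).

Lemma revpath_cons x s : revpath (x :: s) = revpath s ++ [:: flip x].
Proof. by rewrite /revpath /= rev_cons cats1. Qed.

Lemma flipK : involutive flip.
Proof. by case. Qed.

Lemma revpathK : involutive revpath.
Proof. by move=> s; rewrite /revpath map_rev revK -map_comp (eq_map flipK) map_id. Qed.

Lemma nilp_revpath s : nilp (revpath s) = nilp s.
Proof. by rewrite /nilp /revpath size_rev size_map. Qed.

Lemma is_walk_rev a s : is_walk a s ->
  is_walk (walk_end a s) (revpath s) /\ walk_end (walk_end a s) (revpath s) = a.
Proof.
elim: s a => [|x s IH] a //= /andP[/eqP <- Hs].
rewrite walk_end_cons revpath_cons is_walk_cat walk_end_cat.
by have [-> ->] := IH _ Hs; rewrite /= eqxx.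
Qed.

Lemma elem_deform_ctx l r p q :
  elem_deform p q -> elem_deform (l ++ p ++ r) (l ++ q ++ r).
Proof.
case=> l' [r'] [c] [-> ->]; exists (l ++ l'), (r' ++ r), c.
by rewrite !catA -!catA.
Qed.

Lemma homotopic_refl p : homotopic p p. Proof. exact: rst_refl. Qed.

Lemma homotopic_sym p q : homotopic p q -> homotopic q p. Proof. exact: rst_sym. Qed.

Lemma homotopic_trans p q r : homotopic p q -> homotopic q r -> homotopic p r.
Proof. exact: rst_trans. Qed.

Lemma homotopic_ctx l r p q : homotopic p q -> homotopic (l ++ p ++ r) (l ++ q ++ r).
Proof.
elim=> {p q} [p q H | p | p q _ IH | p q t _ IH1 _ IH2].
- by apply: rst_step; apply: elem_deform_ctx.
- exact: homotopic_refl.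
- exact: homotopic_sym.
- exact: homotopic_trans IH1 IH2.
Qed.

Lemma homotopic_cat p p' q q' :
  homotopic p p' -> homotopic q q' -> homotopic (p ++ q) (p' ++ q').
Proof.
move=> H1 H2; apply: (@homotopic_trans _ (p' ++ q)).
  exact: (homotopic_ctx [::] q H1).
by have := homotopic_ctx p' [::] H2; rewrite !cats0.
Qed.

Lemma homotopic_simplex2 l r (c : simplex2 K) :
  homotopic (l ++ s2_d2 c :: s2_d0 c :: r) (l ++ s2_d1 c :: r).
Proof.
have H : homotopic [:: s2_d2 c; s2_d0 c] [:: s2_d1 c].
  by apply: rst_step; exists [::], [::], c.
exact: (homotopic_ctx l r H).
Qed.

Lemma homotopic_flip l r x :
  homotopic (l ++ x :: flip x :: r) (l ++ degen (s1_d1 x) :: r).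
Proof.
exact: (homotopic_simplex2 l r (@Simplex2 d K (flip x) (degen (s1_d1 x)) x
  (s1_sup x) (lexx _) (s1_d1_le x) (lexx _) erefl erefl erefl)).
Qed.

Lemma homotopic_degenr l r x :
  homotopic (l ++ x :: degen (s1_d0 x) :: r) (l ++ x :: r).
Proof.
exact: (homotopic_simplex2 l r (@Simplex2 d K (degen (s1_d0 x)) x x
  (s1_sup x) (s1_d0_le x) (lexx _) (lexx _) erefl erefl erefl)).
Qed.

Lemma homotopic_degenl l r x :
  homotopic (l ++ degen (s1_d1 x) :: x :: r) (l ++ x :: r).
Proof.
exact: (homotopic_simplex2 l r (@Simplex2 d K x x (degen (s1_d1 x))
  (s1_sup x) (lexx _) (lexx _) (s1_d1_le x) erefl erefl erefl)).
Qed.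

Lemma homotopic_edge_comp l r a b c (h1 : a <= b) (h2 : b <= c) (h3 : a <= c) :
  homotopic (l ++ edge h1 :: edge h2 :: r) (l ++ edge h3 :: r).
Proof.
exact: (homotopic_simplex2 l r (@Simplex2 d K (edge h2) (edge h3) (edge h1) c
  (lexx _) (lexx _) h2 erefl erefl erefl)).
Qed.

Lemma homotopic_edge_sup l r x (h0 : s1_d0 x <= s1_sup x) (h1 : s1_d1 x <= s1_sup x) :
  homotopic (l ++ x :: edge h0 :: r) (l ++ edge h1 :: r).
Proof.
exact: (homotopic_simplex2 l r (@Simplex2 d K (edge h0) (edge h1) x (s1_sup x)
  (lexx _) (lexx _) (lexx _) erefl erefl erefl)).
Qed.

Lemma homotopic_cancel s x l r : is_walk (s1_d0 x) s ->
  homotopic (l ++ x :: s ++ revpath s ++ r) (l ++ x :: r).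
Proof.
elim: s x l r => [|b s IH] x l r /=; first by move=> _; exact: homotopic_refl.
move=> /andP[/eqP Eb Hs]; rewrite revpath_cons -catA /=.
have := IH b (l ++ [:: x]) (flip b :: r) Hs; rewrite -!catA /= => H.
apply: homotopic_trans H _.
have := homotopic_flip (l ++ [:: x]) r b; rewrite -catA /= => H2.
by apply: homotopic_trans H2 _; rewrite Eb -catA; exact: homotopic_degenr.
Qed.

Lemma homotopic_cat_rev a s : is_walk a s -> ~~ nilp s ->
  homotopic (s ++ revpath s) [:: degen a].
Proof.
case: s => [//|b s] H _; have /andP[/eqP E _] := H.
apply: homotopic_trans (homotopic_sym (homotopic_degenl [::] _ b)) _.
have := homotopic_cancel (x := degen a) [::] [::] H.
by rewrite cats0 /= E.
Qed.

Lemma homotopic_walk p q : homotopic p q -> forall a,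
  [/\ is_walk a p = is_walk a q, walk_end a p = walk_end a q & nilp p = nilp q].
Proof.
elim=> {p q} [p q H | p | p q _ IH | p q t _ IH1 _ IH2] a.
- case: H => l [r] [c] [-> ->].
  rewrite !is_walk_cat !walk_end_cat /= !walk_end_cons.
  split; last by case: l.
  + case: (is_walk a l) => //=.
    rewrite -(s2_id12 c) (s2_id02 c) eqxx /= (s2_id01 c).
    by case: eqP.
  + by rewrite (s2_id01 c).
- by [].
- by case: (IH a) => -> -> ->.
- by case: (IH1 a) (IH2 a) => -> -> -> [-> -> ->].
Qed.

Lemma homotopic_loop o p q : homotopic p q -> is_loop o p -> is_loop o q.
Proof.
by move=> H; rewrite /is_loop !path_ftE; case: (homotopic_walk H o) => -> -> ->.
Qed.

End Walks.

Section FundamentalGroup.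
Variables (d : Order.disp_t) (K : porderType d) (o : K).
Implicit Types (p q l : seq (simplex1 K)).

Lemma pi1_val_inj (g h : pi1 o) : proj1_sig g = proj1_sig h -> g = h.
Proof. by case: g h => X HX [Y HY] /= E; subst Y; congr exist; exact: proof_irrelevance. Qed.

Lemma pi1_repr_class (g : pi1 o) : proj1_sig g = hclass o (pi1_repr g).
Proof. by rewrite /pi1_repr; case: constructive_indefinite_description => p []. Qed.

Lemma is_loop_degen : is_loop o [:: degen o].
Proof. by []. Qed.

(* Non-loops are sent to the junk value [1]; [loop_class] is only ever
   applied to loops. *)
Definition loop_class l : pi1 o :=
  match excluded_middle_informative (is_loop o l) with
  | left H => exist _ (hclass o l) (ex_intro _ l (conj H erefl))
  | right _ => exist _ (hclass o [:: degen o])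
                 (ex_intro _ [:: degen o] (conj is_loop_degen erefl))
  end.

Lemma loop_class_val l : is_loop o l -> proj1_sig (loop_class l) = hclass o l.
Proof. by rewrite /loop_class; case: excluded_middle_informative. Qed.

Lemma hclass_homotopic p q : homotopic p q -> hclass o p = hclass o q.
Proof.
move=> H; apply: functional_extensionality => t.
apply: propositional_extensionality; split; case=> L H'; split=> //.
  exact: homotopic_trans (homotopic_sym H) H'.
exact: homotopic_trans H H'.
Qed.

Lemma loop_class_homotopic p q : is_loop o p -> homotopic p q -> loop_class p = loop_class q.
Proof.
move=> Lp H; have Lq := homotopic_loop H Lp.
by apply: pi1_val_inj; rewrite !loop_class_val //; apply: hclass_homotopic.
Qed.

Lemma pi1_reprK (g : pi1 o) : loop_class (pi1_repr g) = g.
Proof.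
apply: pi1_val_inj; rewrite loop_class_val; last exact: pi1_repr_loop.
by rewrite pi1_repr_class.
Qed.

Lemma homotopic_repr_loop_class l : is_loop o l -> homotopic (pi1_repr (loop_class l)) l.
Proof.
move=> L; have E := pi1_repr_class (loop_class l).
rewrite loop_class_val // in E.
have : hclass o l l by split=> //; exact: homotopic_refl.
by rewrite E => -[].
Qed.

Lemma pi1_mul_loop_class p q : is_loop o p -> is_loop o q ->
  pi1_mul (loop_class p) (loop_class q) = loop_class (q ++ p).
Proof.
move=> Lp Lq; apply: pi1_val_inj; rewrite loop_class_val /=; last exact: path_ft_cat Lq Lp.
by apply: hclass_homotopic; apply: homotopic_cat; exact: homotopic_repr_loop_class.
Qed.

Lemma homotopic_repr_mul (g h : pi1 o) :
  homotopic (pi1_repr (pi1_mul g h)) (pi1_repr h ++ pi1_repr g).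
Proof.
have [Lg Lh] := (pi1_repr_loop g, pi1_repr_loop h).
rewrite -{1}(pi1_reprK g) -{1}(pi1_reprK h) pi1_mul_loop_class //.
exact/homotopic_repr_loop_class/(path_ft_cat Lh Lg).
Qed.

End FundamentalGroup.

Section Transport.
Variables (d : Order.disp_t) (K : porderType d) (R : realType) (N : netbundle K R).
Local Open Scope order_scope.
Local Notation F := (fun o => (nb_A N o : Type)).
Local Notation T := {a : K & F a}.
Local Notation J h := (@nb_j _ _ _ N _ _ h).
Local Notation JI h := (@nb_jinv _ _ _ N _ _ h).
Local Notation hol := (@hol_path _ _ _ N).
Implicit Types (p q : seq (simplex1 K)) (u v : T).

Lemma Tagged_inj a (x y : F a) : Tagged F x = Tagged F y -> x = y.
Proof. exact: (Eqdep_dec.inj_pair2_eq_dec _ (@eq_comparable K)). Qed.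

Lemma nb_j_inj a b (h : a <= b) : injective (J h).
Proof. exact: bij_inj (nb_j_bij N h). Qed.

Lemma nb_jinvK a b (h : a <= b) : cancel (JI h) (J h).
Proof. by move=> y; rewrite /nb_jinv; case: constructive_indefinite_description. Qed.

Lemma nb_jK a b (h : a <= b) : cancel (J h) (JI h).
Proof. by move=> x; apply: (@nb_j_inj _ _ h); rewrite nb_jinvK. Qed.

Lemma nb_j_refl a (x : F a) : J (lexx a) x = x.
Proof. by apply: (@nb_j_inj _ _ (lexx a)); exact: nb_j_comp. Qed.

Lemma nb_j_iso a b (h : a <= b) : star_iso (J h).
Proof. by split; [exact: nb_j_hom | exact: nb_j_bij]. Qed.

Lemma nb_jinv_iso a b (h : a <= b) : star_iso (JI h).
Proof. exact: star_iso_can (nb_j_iso h) (nb_jK h) (nb_jinvK h). Qed.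

Lemma hol1_iso b : star_iso (@hol1 _ _ _ N b).
Proof. exact: star_iso_comp (nb_j_iso _) (nb_jinv_iso _). Qed.

(* Fibres over different points are compared by pushing them up to a common
   upper bound; elements not lying below [s] are left alone. *)
Definition lift u (s : K) : T :=
  match Bool.bool_dec (tag u <= s) true with
  | left h => Tagged F (J h (tagged u))
  | right _ => u
  end.

Lemma liftE a (x : F a) s (h : a <= s) : lift (Tagged F x) s = Tagged F (J h x).
Proof.
rewrite /lift /=; case: (Bool.bool_dec (a <= s) true) => [h'|]; last by rewrite h.
by rewrite (bool_irrelevance h' h).
Qed.

Lemma lift_lift u a s : tag u <= a -> a <= s -> lift (lift u a) s = lift u s.
Proof.
case: u => b x /= h1 h2.
rewrite (liftE _ h1) (liftE _ h2) (liftE _ (le_trans h1 h2)).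
by rewrite (nb_j_comp h1 h2 (le_trans h1 h2)).
Qed.

Lemma lift_inj u v s : tag u = tag v -> tag u <= s -> lift u s = lift v s -> u = v.
Proof.
case: u => a x; case: v => b y /= E; subst b => h.
by rewrite !(liftE _ h) => /Tagged_inj /nb_j_inj ->.
Qed.

Lemma lift_eq_trans u v a s : lift u a = lift v a ->
  tag u <= a -> tag v <= a -> a <= s -> lift u s = lift v s.
Proof. by move=> E Hu Hv Has; rewrite -(lift_lift Hu Has) -(lift_lift Hv Has) E. Qed.

Lemma hol1_tagE (b : simplex1 K) (x : F (s1_d1 b)) :
  hol1_tag b (Tagged F x) = Tagged F (hol1 x).
Proof. by rewrite /hol1_tag /= eqxx tagged_asE. Qed.

Lemma hol1_tag_lift b u : tag u = s1_d1 b ->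
  tag (hol1_tag b u) = s1_d0 b /\ lift (hol1_tag b u) (s1_sup b) = lift u (s1_sup b).
Proof.
case: u => a x /= E; subst a; rewrite hol1_tagE; split=> //.
by rewrite (liftE _ (s1_d0_le b)) (liftE _ (s1_d1_le b)) /hol1 nb_jinvK.
Qed.

Lemma hol_path_cat p q u : hol (p ++ q) u = hol q (hol p u).
Proof. exact: foldl_cat. Qed.

Lemma hol_path_tag p u : is_walk (tag u) p -> tag (hol p u) = walk_end (tag u) p.
Proof.
elim: p u => [|b p IH] u //= /andP[/eqP E Hp].
have [t1 _] := hol1_tag_lift (esym E).
by rewrite walk_end_cons IH t1 // -t1.
Qed.

Lemma hol1_tag_simplex2 (c : simplex2 K) u : tag u = s1_d1 (s2_d2 c) ->
  hol1_tag (s2_d0 c) (hol1_tag (s2_d2 c) u) = hol1_tag (s2_d1 c) u.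
Proof.
move=> Eu.
have [t2 l2] := hol1_tag_lift Eu.
have [t0 l0] := hol1_tag_lift (b := s2_d0 c) (etrans t2 (esym (s2_id02 c))).
have [t1 l1] := hol1_tag_lift (b := s2_d1 c) (etrans Eu (esym (s2_id12 c))).
apply: (lift_inj (s := s2_sup c)).
- by rewrite t0 t1 s2_id01.
- by rewrite t0; exact: le_trans (s1_d0_le _) (s2_d0_le c).
rewrite (lift_eq_trans l0) ?t0 ?t2 -?s2_id02 ?s1_d0_le ?s1_d1_le ?s2_d0_le //.
rewrite (lift_eq_trans l2) ?t2 ?Eu ?s1_d0_le ?s1_d1_le ?s2_d2_le //.
by rewrite (lift_eq_trans l1) ?t1 ?Eu -?s2_id12 ?s1_d0_le ?s1_d1_le ?s2_d1_le.
Qed.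

Lemma hol_path_elem_deform p q u :
  elem_deform p q -> is_walk (tag u) p -> hol p u = hol q u.
Proof.
case=> l [r] [c] [-> ->]; rewrite is_walk_cat => /andP[Hl /= /andP[/eqP E _]].
by rewrite !hol_path_cat /= hol1_tag_simplex2 // (hol_path_tag Hl) E.
Qed.

Lemma hol_path_homotopic p q : homotopic p q ->
  forall u, is_walk (tag u) p -> hol p u = hol q u.
Proof.
elim=> {p q} [p q H | p | p q Hpq IH | p q t Hpq IH1 Hqt IH2] u Hp.
- exact: hol_path_elem_deform.
- by [].
- by rewrite IH //; case: (homotopic_walk Hpq (tag u)) => ->.
- by rewrite IH1 // IH2 //; case: (homotopic_walk Hpq (tag u)) => <-.
Qed.

Lemma hol1_tag_flip b u : tag u = s1_d1 b -> hol1_tag (flip b) (hol1_tag b u) = u.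
Proof.
move=> Eu; have [t1 l1] := hol1_tag_lift Eu.
have [t2 l2] := hol1_tag_lift (b := flip b) t1.
apply: (lift_inj (s := s1_sup b)); first by rewrite t2 Eu.
  by rewrite t2 s1_d1_le.
by rewrite l2 l1.
Qed.

Lemma hol_path_cat_rev p u : is_walk (tag u) p -> hol (p ++ revpath p) u = u.
Proof.
elim: p u => [|b p IH] u //= /andP[/eqP E Hp].
rewrite revpath_cons catA hol_path_cat /=.
have [t1 _] := hol1_tag_lift (esym E).
by rewrite IH ?t1 // hol1_tag_flip.
Qed.

(* Meaningful when [p] is a walk from [a] to [c]; the [0] only serves to
   type [tagged_as]. *)
Definition transport p a c (x : F a) : F c :=
  tagged_as (Tagged F (0%R : nb_A N c)) (hol p (Tagged F x)).
Arguments transport p a c x : clear implicits.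

Lemma hol_path_transport p a c x : is_walk a p -> walk_end a p = c ->
  hol p (Tagged F x) = Tagged F (transport p a c x).
Proof.
move=> Hp Ec; rewrite /transport.
have : tag (hol p (Tagged F x)) = c by rewrite (hol_path_tag (u := Tagged F x)).
by case: (hol p _) => b y /= E; subst b; rewrite tagged_asE.
Qed.

Lemma transport_eq p a c x y : is_walk a p -> walk_end a p = c ->
  hol p (Tagged F x) = Tagged F y -> transport p a c x = y.
Proof. by move=> Hp Ec; rewrite (hol_path_transport x Hp Ec) => /Tagged_inj. Qed.

Lemma transport_nil a (x : F a) : transport [::] a a x = x.
Proof. by rewrite /transport /= tagged_asE. Qed.

Lemma transport_cons b p c (x : F (s1_d1 b)) :
  is_walk (s1_d0 b) p -> walk_end (s1_d0 b) p = c ->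
  transport (b :: p) (s1_d1 b) c x = transport p (s1_d0 b) c (hol1 x).
Proof.
move=> Hp Ec; apply: transport_eq => //=; first by rewrite eqxx.
by rewrite hol1_tagE; apply: hol_path_transport.
Qed.

Lemma transport_cat p q a b c x :
  is_walk a p -> walk_end a p = b -> is_walk b q -> walk_end b q = c ->
  transport (p ++ q) a c x = transport q b c (transport p a b x).
Proof.
move=> Hp Eb Hq Ec; apply: transport_eq.
- by rewrite is_walk_cat Hp Eb Hq.
- by rewrite walk_end_cat Eb.
by rewrite hol_path_cat (hol_path_transport _ Hp Eb) (hol_path_transport _ Hq Ec).
Qed.

Lemma transport_homotopic p q a c x : homotopic p q ->
  is_walk a p -> walk_end a p = c -> transport p a c x = transport q a c x.
Proof.
move=> H Hp Ec; have [E1 E2 _] := homotopic_walk H a.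
symmetry; apply: transport_eq; rewrite -?E1 -?E2 //.
by rewrite -(hol_path_homotopic H) //; exact: hol_path_transport.
Qed.

Lemma transport_iso p a c : is_walk a p -> walk_end a p = c ->
  star_iso (transport p a c).
Proof.
elim: p a => [|b p IH] a /=.
  by move=> _ <-; apply: eq_star_iso (star_iso_id _) => x; rewrite transport_nil.
move=> /andP[/eqP <- Hp] Ec.
apply: eq_star_iso (star_iso_comp (hol1_iso b) (IH _ Hp Ec)) => x.
by rewrite transport_cons.
Qed.

Lemma transport_edge a b (h : a <= b) (x : F a) : transport [:: edge h] a b x = J h x.
Proof.
rewrite (transport_cons (b := edge h)) //= transport_nil /hol1 /=.
by apply: (@nb_j_inj _ _ (lexx b)); rewrite nb_jinvK nb_j_refl.
Qed.

Lemma transport_revK s a c (x : F c) : is_walk a s -> walk_end a s = c ->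
  transport s a c (transport (revpath s) c a x) = x.
Proof.
move=> Hs Ec; have [H1 H2] := is_walk_rev Hs; rewrite Ec in H1 H2.
rewrite -(transport_cat _ H1 H2 Hs Ec); apply: transport_eq.
- by rewrite is_walk_cat H1 H2.
- by rewrite walk_end_cat H2.
by rewrite -{2}(revpathK s) hol_path_cat_rev.
Qed.

Lemma holonomyE o (g : pi1 o) x : holonomy N o g x = transport (pi1_repr g) o o x.
Proof.
have /path_ftE [_ Hp Ec] := pi1_repr_loop g.
by rewrite /holonomy (hol_path_transport x Hp Ec) tagged_asE.
Qed.

Lemma holonomy_loop_class o l x : is_loop o l ->
  holonomy N o (loop_class o l) x = transport l o o x.
Proof.
move=> L; have /path_ftE [_ Hp Ec] := pi1_repr_loop (loop_class o l).
by rewrite holonomyE; exact: transport_homotopic (homotopic_repr_loop_class L) Hp Ec.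
Qed.

Lemma holonomy_dynsys o : is_dynsys (holonomy N o).
Proof.
split=> [g | g h x].
  have /path_ftE [_ Hp Ep] := pi1_repr_loop g.
  by apply: eq_star_iso (transport_iso Hp Ep) => x; rewrite holonomyE.
have /path_ftE [_ Hg Eg] := pi1_repr_loop g.
have /path_ftE [_ Hh Eh] := pi1_repr_loop h.
have /path_ftE [_ Hm Em] := pi1_repr_loop (pi1_mul g h).
rewrite !holonomyE (transport_homotopic _ (homotopic_repr_mul g h) Hm Em).
exact: transport_cat.
Qed.

End Transport.

Arguments transport {d K R} N p a c x.

Section Morphisms.
Variables (d : Order.disp_t) (K : porderType d) (R : realType) (N M : netbundle K R).
Local Open Scope order_scope.
Variable phi : forall a, nb_A N a -> nb_A M a.
Hypothesis phi_j : forall o a (h : a <= o) x, phi (nb_j h x) = nb_j h (phi x).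

Lemma morph_nb_jinv o a (h : a <= o) y : phi (nb_jinv h y) = nb_jinv h (phi y).
Proof. by apply: (@nb_j_inj _ _ _ M _ _ h); rewrite -phi_j !nb_jinvK. Qed.

Lemma morph_hol1 b (x : nb_A N (s1_d1 b)) : phi (hol1 x) = hol1 (phi x).
Proof. by rewrite /hol1 morph_nb_jinv phi_j. Qed.

Lemma morph_transport p a c x : is_walk a p -> walk_end a p = c ->
  phi (transport N p a c x) = transport M p a c (phi x).
Proof.
elim: p a x => [|b p IH] a x /=; first by move=> _ <-; rewrite !transport_nil.
move=> /andP[/eqP E Hp] Ec; subst a.
by rewrite !transport_cons // IH // morph_hol1.
Qed.

Lemma morph_holonomy o g x : phi (holonomy N o g x) = holonomy M o g (phi x).
Proof.
have /path_ftE [_ Hp Ec] := pi1_repr_loop g.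
by rewrite !holonomyE morph_transport.
Qed.

End Morphisms.

Lemma nb_morph_holonomy d (K : porderType d) (R : realType) (o : K)
    (N M : netbundle K R) (phi : forall a, nb_A N a -> nb_A M a) :
  nb_morph N M phi -> dyn_morph (holonomy N o) (holonomy M o) (phi o).
Proof. by case=> phi_hom phi_j; split=> // g x; exact: morph_holonomy. Qed.

Section BasePaths.
Variables (d : Order.disp_t) (K : porderType d) (R : realType) (o : K).
Hypothesis K_connected : pathwise_connected K.
Local Open Scope order_scope.

Definition base_path (a : K) : seq (simplex1 K) :=
  proj1_sig (constructive_indefinite_description _ (K_connected o a)).

Lemma base_pathP a :
  [/\ ~~ nilp (base_path a), is_walk o (base_path a) & walk_end o (base_path a) = a].
Proof. by rewrite /base_path; case: constructive_indefinite_description => s /= /path_ftE. Qed.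

Lemma base_path_rev a :
  is_walk a (revpath (base_path a)) /\ walk_end a (revpath (base_path a)) = o.
Proof. by have [_ H E] := base_pathP a; have := is_walk_rev H; rewrite E. Qed.

Lemma is_loop_via p a c : is_walk a p -> walk_end a p = c ->
  is_loop o (base_path a ++ p ++ revpath (base_path c)).
Proof.
move=> Hp Ec; have [n1 H1 E1] := base_pathP a; have [H2 E2] := base_path_rev c.
apply/path_ftE; split.
- by case: (base_path a) n1.
- by rewrite !is_walk_cat H1 E1 Hp Ec H2.
- by rewrite !walk_end_cat E1 Ec E2.
Qed.

Lemma is_loop_base_path : is_loop o (base_path o).
Proof. by have [n H E] := base_pathP o; apply/path_ftE; split. Qed.

Lemma is_loop_base_path_rev : is_loop o (revpath (base_path o)).
Proof.
have [n _ _] := base_pathP o; have [H E] := base_path_rev o.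
by apply/path_ftE; split; rewrite ?nilp_revpath.
Qed.

Lemma transport_base_pathK (N : netbundle K R) a (x : nb_A N a) :
  transport N (base_path a) o a (transport N (revpath (base_path a)) a o x) = x.
Proof. by have [_ H E] := base_pathP a; exact: transport_revK. Qed.

Lemma nb_morph_eq (N M : netbundle K R) (phi psi : forall a, nb_A N a -> nb_A M a) :
  nb_morph N M phi -> nb_morph N M psi -> (forall x, phi o x = psi o x) ->
  forall a x, phi a x = psi a x.
Proof.
move=> [_ phi_j] [_ psi_j] E a x; have [_ H1 E1] := base_pathP a.
rewrite -(transport_base_pathK x).
by rewrite (morph_transport phi_j) // (morph_transport psi_j) // E.
Qed.

Lemma transport_edge_loop (N : netbundle K R) a b (h : a <= b) (z : nb_A N o) :
  transport N (base_path a ++ [:: edge h] ++ revpath (base_path b)) o o z =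
  transport N (revpath (base_path b)) b o (nb_j h (transport N (base_path a) o a z)).
Proof.
have [_ Ha Ea] := base_pathP a; have [Hb Eb] := base_path_rev b.
rewrite (transport_cat _ Ha Ea (c := o)); first last.
- by rewrite walk_end_cat.
- by rewrite is_walk_cat /= eqxx Hb.
by rewrite (transport_cat (b := b)) ?transport_edge //= eqxx.
Qed.

Section Extension.
Variables (N M : netbundle K R) (eta : nb_A N o -> nb_A M o).
Hypothesis eta_holonomy : forall g x, eta (holonomy N o g x) = holonomy M o g (eta x).

Definition extend_morph a (x : nb_A N a) : nb_A M a :=
  transport M (base_path a) o a (eta (transport N (revpath (base_path a)) a o x)).
Arguments extend_morph a x : clear implicits.

Lemma extend_morph_star_hom a : star_hom eta -> star_hom (extend_morph a).
Proof.
have [_ H1 E1] := base_pathP a; have [H2 E2] := base_path_rev a.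
move=> eta_hom; apply: star_hom_comp (star_hom_comp _ eta_hom) _.
- exact: (transport_iso N H2 E2).1.
- exact: (transport_iso M H1 E1).1.
Qed.

Lemma extend_morph_bij a : bijective eta -> bijective (extend_morph a).
Proof.
have [_ H1 E1] := base_pathP a; have [H2 E2] := base_path_rev a.
move=> eta_bij; apply: bij_comp (bij_comp eta_bij _).
- exact: (transport_iso M H1 E1).2.
- exact: (transport_iso N H2 E2).2.
Qed.

Lemma extend_morph_j b a (h : a <= b) x :
  extend_morph b (nb_j h x) = nb_j h (extend_morph a x).
Proof.
set l := base_path a ++ [:: edge h] ++ revpath (base_path b).
have L : is_loop o l by apply: is_loop_via; rewrite //= eqxx.
have Ex : transport N (revpath (base_path b)) b o (nb_j h x) =
    holonomy N o (loop_class o l) (transport N (revpath (base_path a)) a o x).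
  by rewrite holonomy_loop_class // transport_edge_loop transport_base_pathK.
rewrite /extend_morph Ex eta_holonomy holonomy_loop_class //.
by rewrite transport_edge_loop transport_base_pathK.
Qed.

Lemma extend_morph_base x : extend_morph o x = eta x.
Proof.
have L := is_loop_base_path.
rewrite /extend_morph -holonomy_loop_class // -eta_holonomy holonomy_loop_class //.
by rewrite transport_base_pathK.
Qed.

End Extension.

Lemma nb_morph_extend_morph (N M : netbundle K R) (eta : nb_A N o -> nb_A M o) :
  dyn_morph (holonomy N o) (holonomy M o) eta ->
  nb_morph N M (extend_morph eta).
Proof.
case=> eta_hom eta_holonomy; split=> [a | b a h x].
  exact: extend_morph_star_hom.
exact: extend_morph_j.
Qed.

Section FromDynamicalSystem.
Variables (A : cstar R) (alpha : pi1 o -> A -> A).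
Hypothesis alpha_dynsys : is_dynsys alpha.

Lemma alpha_iso g : star_iso (alpha g). Proof. exact: alpha_dynsys.1. Qed.

Lemma alpha_mul g h x : alpha (pi1_mul g h) x = alpha g (alpha h x).
Proof. exact: alpha_dynsys.2. Qed.

Lemma alpha_degen x : alpha (loop_class o [:: degen o]) x = x.
Proof.
have L := is_loop_degen o.
have E : pi1_mul (loop_class o [:: degen o]) (loop_class o [:: degen o]) =
         loop_class o [:: degen o].
  rewrite pi1_mul_loop_class //; apply: loop_class_homotopic (path_ft_cat L L) _.
  exact: (homotopic_degenr [::] [::] (degen o)).
by apply: (bij_inj (alpha_iso (loop_class o [:: degen o])).2); rewrite -alpha_mul E.
Qed.

Lemma alpha_cat_rev s x : is_walk o s -> ~~ nilp s ->
  alpha (loop_class o (s ++ revpath s)) x = x.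
Proof.
move=> Hs n; have [H1 H2] := is_walk_rev Hs.
have L : is_loop o (s ++ revpath s).
  apply/path_ftE; split; first by case: s n {Hs H1 H2}.
    by rewrite is_walk_cat Hs H1.
  by rewrite walk_end_cat H2.
by rewrite (loop_class_homotopic L (homotopic_cat_rev Hs n)) alpha_degen.
Qed.

Definition edge_loop a b (h : a <= b) : pi1 o :=
  loop_class o (base_path a ++ edge h :: revpath (base_path b)).

Lemma is_loop_edge a b (h : a <= b) :
  is_loop o (base_path a ++ edge h :: revpath (base_path b)).
Proof. by apply: (is_loop_via (p := [:: edge h])); rewrite //= eqxx. Qed.

Lemma alpha_edge_loop_comp a b c (h1 : a <= b) (h2 : b <= c) (h3 : a <= c) x :
  alpha (edge_loop h2) (alpha (edge_loop h1) x) = alpha (edge_loop h3) x.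
Proof.
have [L1 L2] := (is_loop_edge h1, is_loop_edge h2).
rewrite -alpha_mul /edge_loop pi1_mul_loop_class //.
congr alpha; apply: loop_class_homotopic (path_ft_cat L1 L2) _; rewrite -catA /=.
have [Hb _] := base_path_rev b.
have := homotopic_cancel (x := edge h1) (base_path a) (edge h2 :: revpath (base_path c)) Hb.
rewrite revpathK => H; apply: homotopic_trans H _.
exact: homotopic_edge_comp.
Qed.

Definition dynsys_bundle : netbundle K R :=
  @NetBundle d K R (fun _ => A) (fun b a h => alpha (edge_loop h))
    (fun b a h => (alpha_iso (edge_loop h)).1)
    (fun b a h => star_iso_unital (alpha_iso (edge_loop h)))
    (fun b a h => (alpha_iso (edge_loop h)).2)
    (fun c b a h1 h2 h3 x => alpha_edge_loop_comp h1 h2 h3 x).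

Lemma hol1_dynsys_bundle b (x : A) :
  hol1 (N := dynsys_bundle) (b := b) x =
  alpha (loop_class o (base_path (s1_d1 b) ++ [:: b] ++ revpath (base_path (s1_d0 b)))) x.
Proof.
have Lb : is_loop o (base_path (s1_d1 b) ++ [:: b] ++ revpath (base_path (s1_d0 b))).
  by apply: (is_loop_via (p := [:: b])); rewrite //= eqxx.
have Le := is_loop_edge (s1_d0_le b).
apply: (@nb_j_inj _ _ _ dynsys_bundle _ _ (s1_d0_le b)); rewrite /hol1 nb_jinvK /=.
rewrite -alpha_mul /edge_loop pi1_mul_loop_class //.
congr alpha; symmetry; apply: loop_class_homotopic (path_ft_cat Lb Le) _.
have [H0 _] := base_path_rev (s1_d0 b).
have := homotopic_cancel (x := b) (base_path (s1_d1 b))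
  (edge (s1_d0_le b) :: revpath (base_path (s1_sup b))) H0.
rewrite revpathK -catA /= => H; apply: homotopic_trans H _.
exact: homotopic_edge_sup.
Qed.

Lemma transport_dynsys_bundle p a c (x : A) : is_walk a p -> walk_end a p = c ->
  transport dynsys_bundle p a c x =
  alpha (loop_class o (base_path a ++ p ++ revpath (base_path c))) x.
Proof.
elim: p a c x => [|b p IH] a c x.
  move=> _ <-; rewrite transport_nil.
  by have [n H _] := base_pathP a; rewrite alpha_cat_rev.
move=> /andP[/eqP E Hp] Ec; subst a.
have Lb : is_loop o (base_path (s1_d1 b) ++ [:: b] ++ revpath (base_path (s1_d0 b))).
  by apply: (is_loop_via (p := [:: b])); rewrite //= eqxx.
have Lp := is_loop_via Hp Ec.
rewrite transport_cons // IH // hol1_dynsys_bundle -alpha_mul pi1_mul_loop_class //.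
congr alpha; apply: loop_class_homotopic (path_ft_cat Lb Lp) _.
have [H0 _] := base_path_rev (s1_d0 b).
have := homotopic_cancel (x := b) (base_path (s1_d1 b)) (p ++ revpath (base_path c)) H0.
by rewrite revpathK -catA.
Qed.

Lemma alpha_base_pathK x :
  alpha (loop_class o (base_path o)) (alpha (loop_class o (revpath (base_path o))) x) = x.
Proof.
have [n0 H0 _] := base_pathP o; have [Hr _] := base_path_rev o.
have [Lo Lr] := (is_loop_base_path, is_loop_base_path_rev).
rewrite -alpha_mul pi1_mul_loop_class //.
by have := alpha_cat_rev x Hr; rewrite nilp_revpath revpathK; apply.
Qed.

Lemma holonomy_dynsys_bundle g x :
  holonomy dynsys_bundle o g x =
  alpha (loop_class o (revpath (base_path o))) (alpha g (alpha (loop_class o (base_path o)) x)).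
Proof.
have [Lo Lr] := (is_loop_base_path, is_loop_base_path_rev).
have Lg := pi1_repr_loop g; have /path_ftE [_ Hg Eg] := Lg.
rewrite holonomyE transport_dynsys_bundle // -!alpha_mul.
by rewrite -{2}(pi1_reprK g) !pi1_mul_loop_class //; exact: path_ft_cat Lg Lr.
Qed.

Lemma dyn_iso_dynsys_bundle : dyn_iso alpha (holonomy dynsys_bundle o).
Proof.
exists (alpha (loop_class o (revpath (base_path o)))).
split; last exact: (alpha_iso _).2.
split=> [|g x]; first exact: (alpha_iso _).1.
by rewrite holonomy_dynsys_bundle alpha_base_pathK.
Qed.

End FromDynamicalSystem.

End BasePaths.

Theorem proposition3p8 (R : realType) (d : Order.disp_t) (K : porderType d) (o : K) :
  pathwise_connected K ->
  (* the holonomy (A_o, pi_1^o(K), j_* ) of a C*-net bundle is a C*-dynamical system *)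
  (forall N : netbundle K R, is_dynsys (holonomy N o)) /\
  (* the assignment is well defined on isomorphism classes ... *)
  (forall N M : netbundle K R, nb_iso N M -> dyn_iso (holonomy N o) (holonomy M o)) /\
  (* ... injective on isomorphism classes ... *)
  (forall N M : netbundle K R, dyn_iso (holonomy N o) (holonomy M o) -> nb_iso N M) /\
  (* ... and surjective onto isomorphism classes of dynamical systems *)
  (forall (A : cstar R) (alpha : pi1 o -> A -> A),
      is_dynsys alpha -> exists N : netbundle K R, dyn_iso alpha (holonomy N o)) /\
  (* equivalence of categories: phi |-> phi_o is a functor ... *)
  (forall (N M : netbundle K R) (phi : forall a, nb_A N a -> nb_A M a),
      nb_morph N M phi -> dyn_morph (holonomy N o) (holonomy M o) (phi o)) /\
  (* ... which is full ... *)
  (forall (N M : netbundle K R) (eta : nb_A N o -> nb_A M o),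
      dyn_morph (holonomy N o) (holonomy M o) eta ->
      exists phi : forall a, nb_A N a -> nb_A M a,
        nb_morph N M phi /\ forall x, phi o x = eta x) /\
  (* ... and faithful *)
  (forall (N M : netbundle K R) (phi psi : forall a, nb_A N a -> nb_A M a),
      nb_morph N M phi -> nb_morph N M psi -> (forall x, phi o x = psi o x) ->
      forall a x, phi a x = psi a x).
Proof.
move=> Kc; split=> [N | ]; first exact: holonomy_dynsys.
split=> [N M [phi [Hphi phi_bij]] | ].
  by exists (phi o); split; [exact: nb_morph_holonomy | exact: phi_bij].
split=> [N M [eta [Heta eta_bij]] | ].
  exists (extend_morph Kc eta); split; first exact: nb_morph_extend_morph.
  by move=> a; apply: extend_morph_bij.
split=> [A alpha Halpha | ].
  by exists (dynsys_bundle Kc Halpha); exact: dyn_iso_dynsys_bundle.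
split; first exact: nb_morph_holonomy.
split=> [N M eta Heta | ]; last exact: nb_morph_eq.
exists (extend_morph Kc eta); split; first exact: nb_morph_extend_morph.
by move=> x; apply: extend_morph_base; case: Heta.
Qed.
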